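(* Let $T:\mathbb{Z}_{\ge 0}\to\mathbb{R}$ satisfy $T(mn) = T(m)T(n) + T(m-1)T(n-1)$ for all integers $m,n\ge 1$, and suppose $T(0)=0$ and $T(1)=1$. Write $c=T(2)$ and $d=T(3)$. Then for all $n\ge 1$, $$T(2n)=cT(n)+T(n-1)\quad\text{and}\quad T(2n-1)=T(n)+(d-c)T(n-1).$$ In particular, $T(n)$ for every $n\ge 3$ is determined by $c$ and $d$: if $T'$ is another sequence satisfying the same product rule with $T'(0)=0$, $T'(1)=1$, $T'(2)=c$, $T'(3)=d$, then $T'(n)=T(n)$ for all $n\ge 0$. *)

From Stdlib Require Import Reals Lra Lia.
Open Scope R_scope.

(* The product rule T(mn) = T(m)T(n) + T(m-1)T(n-1) for all m, n >= 1.
   (nat subtraction is exact here since m, n >= 1.) *)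
Definition prod_rule (T : nat -> R) : Prop :=
  forall m n : nat, (1 <= m)%nat -> (1 <= n)%nat ->
    T (m * n)%nat = T m * T n + T (m - 1)%nat * T (n - 1)%nat.

From Stdlib Require Import Reals Lra Lia.
Open Scope R_scope.

(* Taking m = 2 in the product rule gives the even recursion.  Computing T(4n)
   both as T(4)T(n) + T(3)T(n-1) and as T(2 (2n)) via the even recursion,
   with T(4) = c^2 + 1, yields the odd recursion.  Since 2n and 2n - 1 exceed
   n and n - 1 for n >= 2, strong induction shows T is determined by its
   values at 0, 1, 2, 3. *)

Section ProductRule.

Variable T : nat -> R.
Hypothesis T_prod : prod_rule T.
Hypothesis T1 : T 1%nat = 1.

Lemma prod_rule_double (n : nat) : (1 <= n)%nat ->
  T (2 * n)%nat = T 2%nat * T n + T (n - 1)%nat.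
Proof.
  intros Hn. rewrite (T_prod 2%nat n) by lia.
  replace (2 - 1)%nat with 1%nat by lia. rewrite T1; ring.
Qed.

Lemma prod_rule_four : T 4%nat = T 2%nat * T 2%nat + 1.
Proof.
  replace 4%nat with (2 * 2)%nat by lia. rewrite prod_rule_double by lia.
  replace (2 - 1)%nat with 1%nat by lia. rewrite T1; ring.
Qed.

Lemma prod_rule_odd (n : nat) : (1 <= n)%nat ->
  T (2 * n - 1)%nat = T n + (T 3%nat - T 2%nat) * T (n - 1)%nat.
Proof.
  intros Hn.
  assert (via_four : T (4 * n)%nat = T 4%nat * T n + T 3%nat * T (n - 1)%nat).
  { rewrite (T_prod 4%nat n) by lia. replace (4 - 1)%nat with 3%nat by lia. ring. }
  assert (via_double : T (4 * n)%nat = T 2%nat * T (2 * n)%nat + T (2 * n - 1)%nat).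
  { replace (4 * n)%nat with (2 * (2 * n))%nat by lia.
    apply prod_rule_double; lia. }
  rewrite prod_rule_four in via_four.
  rewrite prod_rule_double in via_double by exact Hn.
  lra.
Qed.

End ProductRule.

Lemma prod_rule_unique (T T' : nat -> R) :
  prod_rule T -> prod_rule T' -> T 1%nat = 1 -> T' 1%nat = 1 ->
  (forall n : nat, (n <= 3)%nat -> T' n = T n) ->
  forall n : nat, T' n = T n.
Proof.
  intros HP HP' H1 H1' Hsmall n.
  induction n as [n IH] using (well_founded_induction Wf_nat.lt_wf).
  destruct (Nat.le_gt_cases n 3) as [Hle | Hgt]; [now apply Hsmall |].
  assert (H2 : T' 2%nat = T 2%nat) by (apply Hsmall; lia).
  assert (H3 : T' 3%nat = T 3%nat) by (apply Hsmall; lia).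
  destruct (Nat.Even_or_Odd n) as [[k ->] | [k ->]].
  - rewrite (prod_rule_double T HP H1), (prod_rule_double T' HP' H1') by lia.
    rewrite H2, (IH k), (IH (k - 1)%nat) by lia. reflexivity.
  - replace (2 * k + 1)%nat with (2 * (k + 1) - 1)%nat by lia.
    rewrite (prod_rule_odd T HP H1), (prod_rule_odd T' HP' H1') by lia.
    rewrite H2, H3, (IH (k + 1)%nat), (IH (k + 1 - 1)%nat) by lia. reflexivity.
Qed.

Theorem lemma9 (T : nat -> R) :
  prod_rule T -> T 0%nat = 0 -> T 1%nat = 1 ->
  (forall n : nat, (1 <= n)%nat ->
     T (2 * n)%nat = T 2%nat * T n + T (n - 1)%nat /\
     T (2 * n - 1)%nat = T n + (T 3%nat - T 2%nat) * T (n - 1)%nat) /\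
  (forall T' : nat -> R,
     prod_rule T' -> T' 0%nat = 0 -> T' 1%nat = 1 ->
     T' 2%nat = T 2%nat -> T' 3%nat = T 3%nat ->
     forall n : nat, T' n = T n).
Proof.
  intros HP H0 H1. split.
  - intros n Hn. split; [exact (prod_rule_double T HP H1 n Hn)
                        | exact (prod_rule_odd T HP H1 n Hn)].
  - intros T' HP' H0' H1' H2' H3'.
    apply (prod_rule_unique T T' HP HP' H1 H1').
    intros [|[|[|[|n]]]] Hn; try congruence; lia.
Qed.
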